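(* Let $0<x<1$ and put $g=x\frac{1+x+x^2}{(1+4x+x^2)^2}$. For integers $s\ge 0$ let $$R_s=\frac{1+4x+x^2}{1+x+x^2}\,\frac{(1-x^s)(1-x^{s+3})}{(1-x^{s+1})(1-x^{s+2})}$$ (so $R_0=0$), and for integers $s,t\ge 0$ let $$X_{s,t}=\frac{(1-x^3)(1-x^{s+1})(1-x^{t+1})(1-x^{s+t+3})}{(1-x)(1-x^{s+3})(1-x^{t+3})(1-x^{s+t+1})}.$$ Then $X_{s,0}=X_{0,t}=1$, and for all $s,t\ge 0$ $$X_{s,t}=1+g\,R_sR_t\,X_{s,t}\bigl(1+g\,R_{s+1}R_{t+1}X_{s+1,t+1}\bigr).$$ Moreover, for every $s\ge 1$, $$\log\!\left(\frac{X_{s,s}X_{s-1,s-1}}{X_{s-1,s}X_{s,s-1}}\right)=\log\left\{\frac{(1-x^{2s+3})(1-x^{2s})^2}{(1-x^{2s-1})(1-x^{2s+2})^2}\right\}.$$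
   Context: The quantity $X_{s,t}$ at $z=1$ is the generating function (weight $g$ per edge) of labelled chains with left labels $\ge 1-s$ and right labels $\ge 1-t$; the displayed recursion is the equation characterizing it, and the logarithmic expression is the generating function $F_s(g,1)$ of bi-pointed planar quadrangulations (weight $g$ per face) whose two marked vertices are at graph distance $2s$. *)

From Stdlib Require Import Reals.
Open Scope R_scope.

Definition gq (x : R) : R := x * (1 + x + x^2) / (1 + 4*x + x^2)^2.

Definition Rs (x : R) (s : nat) : R :=
  (1 + 4*x + x^2) / (1 + x + x^2)
  * ((1 - x^s) * (1 - x^(s+3)) / ((1 - x^(s+1)) * (1 - x^(s+2)))).

Definition Xst (x : R) (s t : nat) : R :=
  (1 - x^3) * (1 - x^(s+1)) * (1 - x^(t+1)) * (1 - x^(s+t+3))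
  / ((1 - x) * (1 - x^(s+3)) * (1 - x^(t+3)) * (1 - x^(s+t+1))).

From Stdlib Require Import Reals Lra Lia.
Open Scope R_scope.

(* Both R_s and X_{s,t} are rational functions of x, a = x^s and b = x^t, and
   s -> s+1 just replaces a by a x.  The recursion and the cross-ratio of X are
   therefore identities between rational functions of (x, a, b), valid as soon
   as no denominator vanishes.  Every denominator has the form 1 - p with p a
   product of a, b and positive powers of x, so 0 < p < 1 when 0 < x < 1 and
   0 < a, b <= 1.  The logarithmic identity is then equality of arguments. *)

Section RationalForm.

Variable x : R.

Definition Rrat (a : R) : R :=
  (1 + 4*x + x^2) / (1 + x + x^2)
  * ((1 - a) * (1 - a*x^3) / ((1 - a*x) * (1 - a*x^2))).

Definition Xrat (a b : R) : R :=
  (1 - x^3) * (1 - a*x) * (1 - b*x) * (1 - a*b*x^3)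
  / ((1 - x) * (1 - a*x^3) * (1 - b*x^3) * (1 - a*b*x)).

Lemma Rs_Rrat (s : nat) : Rs x s = Rrat (x^s).
Proof. unfold Rs, Rrat. rewrite !pow_add, pow_1. reflexivity. Qed.

Lemma Xst_Xrat (s t : nat) : Xst x s t = Xrat (x^s) (x^t).
Proof. unfold Xst, Xrat. rewrite !pow_add, !pow_1. reflexivity. Qed.

Lemma Xrat_comm (a b : R) : Xrat a b = Xrat b a.
Proof. unfold Xrat. f_equal; ring. Qed.

Lemma pow_S_r (n : nat) : x^(S n) = x^n * x.
Proof. simpl. ring. Qed.

Lemma pow_double_add (n k : nat) : x^(2*n + k) = (x^n)^2 * x^k.
Proof. rewrite pow_add, (Nat.mul_comm 2 n), pow_mult. reflexivity. Qed.

Hypothesis hx : 0 < x < 1.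

Lemma unit_mul (p q : R) : 0 < p <= 1 -> 0 < q <= 1 -> 0 < p * q <= 1.
Proof. intros; split; nra. Qed.

Lemma unit_pow (p : R) (n : nat) : 0 < p <= 1 -> 0 < p^n <= 1.
Proof.
  intros Hp; induction n as [|n IH]; simpl; [lra|].
  apply unit_mul; assumption.
Qed.

Lemma pow_open_unit (n : nat) : (0 < n)%nat -> 0 < x^n < 1.
Proof.
  intros Hn.
  pose proof (pow_lt_1_compat x n ltac:(lra) Hn).
  pose proof (pow_lt x n ltac:(lra)).
  lra.
Qed.

Lemma one_sub_mul_neq0 (p q : R) : 0 < p <= 1 -> 0 < q < 1 -> 1 - p * q <> 0.
Proof. intros; nra. Qed.

Ltac unit_interval :=
  repeat first [ assumption | lra | apply unit_mul | apply unit_pow ].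

Ltac denominators_neq0 :=
  repeat split;
  match goal with
  | |- _ + _ <> 0 => apply Rgt_not_eq; nra
  | |- 1 - x <> 0 => lra
  | |- 1 - x ^ ?n <> 0 => pose proof (pow_open_unit n ltac:(lia)); lra
  | |- 1 - _ * x <> 0 => apply one_sub_mul_neq0; [unit_interval | lra]
  | |- 1 - _ * x ^ _ <> 0 =>
      apply one_sub_mul_neq0; [unit_interval | apply pow_open_unit; lia]
  end.

Lemma Rrat_1 : Rrat 1 = 0.
Proof. unfold Rrat. field. denominators_neq0. Qed.

Lemma Xrat_r1 (a : R) : 0 < a <= 1 -> Xrat a 1 = 1.
Proof. intros Ha. unfold Xrat. field. denominators_neq0. Qed.

Lemma Xrat_recursion (a b : R) : 0 < a <= 1 -> 0 < b <= 1 ->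
  Xrat a b =
    1 + gq x * Rrat a * Rrat b * Xrat a b
        * (1 + gq x * Rrat (a*x) * Rrat (b*x) * Xrat (a*x) (b*x)).
Proof. intros Ha Hb. unfold Xrat, Rrat, gq. field. denominators_neq0. Qed.

Lemma Xrat_cross_ratio (a : R) : 0 < a <= 1 ->
  Xrat (a*x) (a*x) * Xrat a a / (Xrat a (a*x) * Xrat (a*x) a) =
  (1 - a^2 * x^5) * (1 - a^2 * x^2)^2 / ((1 - a^2 * x) * (1 - a^2 * x^4)^2).
Proof. intros Ha. unfold Xrat. field. denominators_neq0. Qed.

End RationalForm.

Theorem mainTheorem1 (x : R) (hx0 : 0 < x) (hx1 : x < 1) :
  Rs x 0 = 0 /\
  (forall s : nat, Xst x s 0 = 1) /\
  (forall t : nat, Xst x 0 t = 1) /\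
  (forall s t : nat,
     Xst x s t =
       1 + gq x * Rs x s * Rs x t * Xst x s t
           * (1 + gq x * Rs x (S s) * Rs x (S t) * Xst x (S s) (S t))) /\
  (forall s : nat, (1 <= s)%nat ->
     ln (Xst x s s * Xst x (s - 1) (s - 1)
         / (Xst x (s - 1) s * Xst x s (s - 1)))
     = ln ((1 - x^(2*s+3)) * (1 - x^(2*s))^2
           / ((1 - x^(2*s-1)) * (1 - x^(2*s+2))^2))).
Proof.
  assert (hx : 0 < x < 1) by lra.
  assert (pow_unit : forall n, 0 < x^n <= 1) by (intro; apply unit_pow; lra).
  split; [|split; [|split; [|split]]].
  - rewrite Rs_Rrat, pow_O. exact (Rrat_1 x hx).
  - intro s. rewrite Xst_Xrat, pow_O. apply Xrat_r1; auto.
  - intro t. rewrite Xst_Xrat, pow_O, Xrat_comm. apply Xrat_r1; auto.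
  - intros s t. rewrite !Rs_Rrat, !Xst_Xrat, !pow_S_r.
    apply Xrat_recursion; auto.
  - intros s Hs. destruct s as [|n]; [lia|].
    replace (S n - 1)%nat with n by lia.
    replace (2 * S n + 3)%nat with (2*n + 5)%nat by lia.
    replace (2 * S n - 1)%nat with (2*n + 1)%nat by lia.
    replace (2 * S n + 2)%nat with (2*n + 4)%nat by lia.
    replace (2 * S n)%nat with (2*n + 2)%nat by lia.
    rewrite !pow_double_add, pow_1, !Xst_Xrat, (pow_S_r x n).
    f_equal. apply Xrat_cross_ratio; auto.
Qed.
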